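(* Let $(A,\dashv,\perp,\vdash,\varepsilon)$ be an associative color trialgebra. Then $A$ is a ternary Leibniz color algebra with respect to the bracket $$[x,y,z]:=x\dashv\big(y\perp z-\varepsilon(y,z)\,z\perp y\big)-\varepsilon(x,y+z)\big(y\perp z-\varepsilon(y,z)\,z\perp y\big)\vdash x$$ for all $x,y,z\in\mathcal{H}(A)$.
   Context: $G$ is an abelian group, $\mathbb{K}$ a field of characteristic $\neq 2$, $\mathcal{H}(V)$ the homogeneous elements of a $G$-graded space $V$; even maps preserve degree. A skew-symmetric bicharacter $\varepsilon:G\times G\to\mathbb{K}^*$ satisfies $\varepsilon(a,b)\varepsilon(b,a)=1$, $\varepsilon(a,b+c)=\varepsilon(a,b)\varepsilon(a,c)$, $\varepsilon(a+b,c)=\varepsilon(a,c)\varepsilon(b,c)$; $\varepsilon(x,y)$ means $\varepsilon$ of the degrees. An associative color trialgebra is a $G$-graded space $A$ with such $\varepsilon$ and three even bilinear associative operations $\dashv,\perp,\vdash$ satisfying, for all homogeneous $x,y,z$: $(x\dashv y)\dashv z=x\dashv(y\vdash z)=x\dashv(y\perp z)$; $(x\vdash y)\dashv z=x\vdash(y\dashv z)$; $(x\dashv y)\vdash z=x\vdash(y\vdash z)=(x\perp y)\vdash z$; $(x\perp y)\dashv z=x\perp(y\dashv z)$; $(x\dashv y)\perp z=x\perp(y\vdash z)$; $(x\vdash y)\perp z=x\vdash(y\perp z)$. A ternary Leibniz color algebra is a $G$-graded space with such $\varepsilon$ and an even trilinear $[-,-,-]$ satisfying $[[x,y,z],t,u]=[x,y,[z,t,u]]+\varepsilon(z,t+u)[x,[y,t,u],z]+\varepsilon(y+z,t+u)[[x,t,u],y,z]$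 for all homogeneous $x,y,z,t,u$. *)

From HB Require Import structures.
From mathcomp Require Import all_boot all_order all_algebra.
Set Implicit Arguments. Unset Strict Implicit. Unset Printing Implicit Defensive.
Import Order.TTheory GRing.Theory.
Local Open Scope ring_scope.

Section Defs.
Variables (G : zmodType) (K : fieldType) (A : lmodType K).

Definition is_grading (hom : G -> A -> Prop) : Prop :=
  [/\ (forall g, hom g 0),
      (forall g (k : K) (u v : A), hom g u -> hom g v -> hom g (k *: u + v)),
      (forall x : A, exists s : seq G, exists f : G -> A,
          [/\ uniq s, (forall g, hom g (f g)) & x = \sum_(g <- s) f g])
    & (forall (s : seq G) (f : G -> A), uniq s -> (forall g, hom g (f g)) ->
          \sum_(g <- s) f g = 0 -> forall g, g \in s -> f g = 0)].

Definition skew_bicharacter (eps : G -> G -> K) : Prop :=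
  [/\ (forall a b, eps a b != 0),
      (forall a b, eps a b * eps b a = 1),
      (forall a b c, eps a (b + c) = eps a b * eps a c)
    & (forall a b c, eps (a + b) c = eps a c * eps b c)].

Definition even_bilinear (hom : G -> A -> Prop) (op : A -> A -> A) : Prop :=
  [/\ (forall (k : K) x x' y, op (k *: x + x') y = k *: op x y + op x' y),
      (forall (k : K) x y y', op x (k *: y + y') = k *: op x y + op x y')
    & (forall a b x y, hom a x -> hom b y -> hom (a + b) (op x y))].

Definition even_trilinear (hom : G -> A -> Prop) (T : A -> A -> A -> A) : Prop :=
  [/\ (forall (k : K) x x' y z, T (k *: x + x') y z = k *: T x y z + T x' y z),
      (forall (k : K) x y y' z, T x (k *: y + y') z = k *: T x y z + T x y' z),
      (forall (k : K) x y z z', T x y (k *: z + z') = k *: T x y z + T x y z')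
    & (forall a b c x y z, hom a x -> hom b y -> hom c z ->
         hom (a + b + c) (T x y z))].

(* associative color trialgebra (dl = ⊣, pp = ⊥, dr = ⊢) *)
Definition color_trialgebra (hom : G -> A -> Prop) (eps : G -> G -> K)
    (dl pp dr : A -> A -> A) : Prop :=
  [/\ is_grading hom, skew_bicharacter eps,
      [/\ even_bilinear hom dl, even_bilinear hom pp & even_bilinear hom dr]
    & forall a b c x y z, hom a x -> hom b y -> hom c z ->
      dl (dl x y) z = dl x (dl y z) /\
      pp (pp x y) z = pp x (pp y z) /\
      dr (dr x y) z = dr x (dr y z) /\
      (dl (dl x y) z = dl x (dr y z) /\ dl x (dr y z) = dl x (pp y z)) /\
      dl (dr x y) z = dr x (dl y z) /\
      (dr (dl x y) z = dr x (dr y z) /\ dr x (dr y z) = dr (pp x y) z) /\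
      dl (pp x y) z = pp x (dl y z) /\
      pp (dl x y) z = pp x (dr y z) /\
      pp (dr x y) z = dr x (pp y z)].

Definition ternary_leibniz_color (hom : G -> A -> Prop) (eps : G -> G -> K)
    (T : A -> A -> A -> A) : Prop :=
  [/\ is_grading hom, skew_bicharacter eps, even_trilinear hom T
    & forall a b c d e x y z t u,
        hom a x -> hom b y -> hom c z -> hom d t -> hom e u ->
        T (T x y z) t u =
          T x y (T z t u) + eps c (d + e) *: T x (T y t u) z
          + eps (b + c) (d + e) *: T (T x t u) y z].

(* the bracket on homogeneous x, y, z of degrees a, b, c *)
Definition tri_bracket (eps : G -> G -> K) (dl pp dr : A -> A -> A)
    (a b c : G) (x y z : A) : A :=
  let w := pp y z - eps b c *: pp z y in
  dl x w - eps a (b + c) *: dr w x.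

End Defs.

From mathcomp Require Import all_boot all_order all_algebra.
From mathcomp Require Import ring.
From Stdlib Require Import IndefiniteDescription.
Import GRing.Theory.
Local Open Scope ring_scope.
Set Implicit Arguments. Unset Strict Implicit. Unset Printing Implicit Defensive.

(* The bracket is [x, y, z] = {x, [y, z]}, where {x, w} = x ⊣ w - ε(x, w) w ⊢ x
   is the Leibniz bracket of the dialgebra (⊣, ⊢) and
   [y, z] = y ⊥ z - ε(y, z) z ⊥ y is the color commutator of ⊥.  The
   dialgebra axioms make {-, -} a color Leibniz bracket, and the axioms mixing
   ⊥ with ⊣ and ⊢ make {-, v} a color derivation of ⊥, hence of [-, -].
   The ternary identity is the Leibniz identity of {-, -} at the arguments
   [y, z] and [t, u], followed by this derivation rule.  The formula only
   defines the bracket on homogeneous elements; it extends trilinearly to A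
   through the homogeneous decomposition, which is unique because the grading
   is a direct sum. *)

Section LinearMaps.
Variables (R : pzRingType) (U V : lmodType R) (F : U -> V).
Hypothesis linF : linear F.

Lemma lin0 : F 0 = 0.
Proof.
have := linF 1 0 0; rewrite !scale1r addr0 => F0_double.
by apply: (addrI (F 0)); rewrite addr0 -F0_double.
Qed.

Lemma linZ k u : F (k *: u) = k *: F u.
Proof. by rewrite -[k *: u]addr0 linF lin0 addr0. Qed.

Lemma linD u u' : F (u + u') = F u + F u'.
Proof. by have := linF 1 u u'; rewrite !scale1r. Qed.

Lemma linB u u' : F (u - u') = F u - F u'.
Proof. by rewrite -scaleN1r addrC linF scaleN1r addrC. Qed.

End LinearMaps.

Lemma linear_subZ (R : comPzRingType) (U V : lmodType R) (F1 F2 : U -> V) e :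
  linear F1 -> linear F2 -> linear (fun u => F1 u - e *: F2 u).
Proof.
move=> lin1 lin2 k u u'; rewrite lin1 lin2 scalerDr !scalerA mulrC -scalerA.
by rewrite scalerBr opprD addrACA.
Qed.

Section LinearCombination.
Variables (R : pzRingType) (V : lmodType R) (ms : seq V).

Definition lincomb (c : nat -> R) : V := \sum_(i < size ms) c i *: ms`_i.

Lemma eq_lincomb (c d : nat -> R) :
  (forall i, (i < size ms)%N -> c i = d i) -> lincomb c = lincomb d.
Proof. by move=> eq_cd; apply: eq_bigr => i _; rewrite eq_cd. Qed.

Lemma lincombD c d : lincomb c + lincomb d = lincomb (fun i => c i + d i).
Proof. by rewrite /lincomb -big_split; apply: eq_bigr => i _; rewrite scalerDl. Qed.

Lemma lincombZ k c : k *: lincomb c = lincomb (fun i => k * c i).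
Proof. by rewrite /lincomb scaler_sumr; apply: eq_bigr => i _; rewrite scalerA. Qed.

Lemma lincombB c d : lincomb c - lincomb d = lincomb (fun i => c i - d i).
Proof.
rewrite -scaleN1r lincombZ lincombD.
by apply: eq_lincomb => i _; rewrite mulN1r.
Qed.

Lemma lincomb_nth j :
  (j < size ms)%N -> ms`_j = lincomb (fun i => if i == j then 1 else 0).
Proof.
move=> lt_j; rewrite /lincomb (bigD1 (Ordinal lt_j)) //= eqxx scale1r big1 ?addr0 //.
by move=> i; rewrite -val_eqE /= => /negbTE ->; rewrite scale0r.
Qed.

End LinearCombination.

(* An identity between linear combinations of the atoms [l] is reduced to one
   equation between coefficients per atom (at most six atoms). *)
Ltac lincomb_atoms ms l i :=
  lazymatch l with
  | nil => idtac
  | cons ?m ?l' =>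
      let N := fresh "N" in set N := m;
      rewrite [N](@lincomb_nth _ _ ms i) //; clear N; lincomb_atoms ms l' (S i)
  end.
Ltac lincomb_eq l :=
  let ms := fresh "ms" in pose ms := l;
  lincomb_atoms ms l 0%nat;
  rewrite !(lincombZ, lincombB, lincombD);
  apply: eq_lincomb => -[|[|[|[|[|[|?]]]]]] //= _.

Lemma sum_if_mem (I : eqType) (V : nmodType) (s S : seq I) (F : I -> V) :
  uniq s -> uniq S -> {subset s <= S} ->
  \sum_(i <- S) (if i \in s then F i else 0) = \sum_(i <- s) F i.
Proof.
move=> uniq_s uniq_S sub_sS; rewrite -big_mkcond -big_filter; apply: perm_big.
apply: uniq_perm; [exact: filter_uniq | by [] | move=> i].
by rewrite mem_filter andb_idr // => /sub_sS.
Qed.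

Section GradedSpace.
Variables (G : zmodType) (K : fieldType) (A : lmodType K) (hom : G -> A -> Prop).
Hypothesis grading : is_grading hom.

Lemma hom0 g : hom g 0.
Proof. by case: grading. Qed.

Lemma hom_lin g k u v : hom g u -> hom g v -> hom g (k *: u + v).
Proof. by case: grading => _ hom_lin _ _; apply: hom_lin. Qed.

Lemma homBZ g k u v : hom g u -> hom g v -> hom g (u - k *: v).
Proof. by move=> hu hv; rewrite addrC -scaleNr; apply: hom_lin. Qed.

Lemma homB g u v : hom g u -> hom g v -> hom g (u - v).
Proof. by move=> hu hv; rewrite -[v]scale1r; apply: homBZ. Qed.

Lemma homogeneous_decomposition x : exists sf : seq G * (G -> A),
  [/\ uniq sf.1, forall g, hom g (sf.2 g) & x = \sum_(g <- sf.1) sf.2 g].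
Proof. by case: grading => _ _ dec _; have [s [f ?]] := dec x; exists (s, f). Qed.

(* The choice is arbitrary, but since the sum of the homogeneous components is
   direct its nonzero components are not (proj_decomposition). *)
Definition decomposition x :=
  sval (constructive_indefinite_description _ (homogeneous_decomposition x)).

Definition support x := (decomposition x).1.

Definition proj g x := if g \in support x then (decomposition x).2 g else 0.

Lemma decompositionP x :
  [/\ uniq (support x), forall g, hom g ((decomposition x).2 g)
     & x = \sum_(g <- support x) (decomposition x).2 g].
Proof.
exact: proj2_sig (constructive_indefinite_description _ (homogeneous_decomposition x)).
Qed.

Lemma proj_hom g x : hom g (proj g x).
Proof. by rewrite /proj; case: ifP => _; [case: (decompositionP x) | apply: hom0]. Qed.

Lemma proj_notin g x : g \notin support x -> proj g x = 0.
Proof. by rewrite /proj => /negbTE ->. Qed.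

Lemma sum_proj x S : uniq S -> {subset support x <= S} ->
  \sum_(g <- S) proj g x = x.
Proof.
have [uniq_x _ {3}->] := decompositionP x.
by move=> uniq_S sub_xS; rewrite sum_if_mem.
Qed.

Lemma proj_decomposition (s : seq G) (f : G -> A) x :
  uniq s -> (forall g, hom g (f g)) -> x = \sum_(g <- s) f g ->
  forall g, proj g x = if g \in s then f g else 0.
Proof.
move=> uniq_s hom_f def_x g; pose S := undup (support x ++ s).
have uniq_S : uniq S := undup_uniq _.
have sub_xS : {subset support x <= S} by move=> i xi; rewrite mem_undup mem_cat xi.
have sub_sS : {subset s <= S} by move=> i si; rewrite mem_undup mem_cat si orbT.
pose h i := proj i x - (if i \in s then f i else 0).
have hom_h i : hom i (h i).
  by apply: homB; [exact: proj_hom | case: ifP => _; [exact: hom_f | exact: hom0]].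
have sum_h : \sum_(i <- S) h i = 0.
  by rewrite sumrB sum_proj // sum_if_mem // -def_x subrr.
case: grading => _ _ _ direct; case: (boolP (g \in S)) => [Sg | notSg].
  by apply/eqP; rewrite -subr_eq0 -/(h g) (direct S h).
rewrite proj_notin; last by apply: contra notSg; apply: sub_xS.
by case: ifP => // si; case/negP: notSg; apply: sub_sS.
Qed.

Lemma proj_linear g : linear (proj g).
Proof.
move=> k x y; pose S := undup (support x ++ support y).
have sub_xS : {subset support x <= S} by move=> i xi; rewrite mem_undup mem_cat xi.
have sub_yS : {subset support y <= S} by move=> i yi; rewrite mem_undup mem_cat yi orbT.
rewrite (@proj_decomposition S (fun i => k *: proj i x + proj i y)) ?undup_uniq //.
- case: ifP => // /negbT notSg.
  rewrite !proj_notin ?scaler0 ?addr0 //; apply: contra notSg => in_supp.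
  + exact: sub_yS.
  + exact: sub_xS.
- by move=> i; apply: hom_lin; apply: proj_hom.
- by rewrite big_split /= -scaler_sumr !sum_proj ?undup_uniq.
Qed.

Lemma proj_homog a x g : hom a x -> proj g x = if g == a then x else 0.
Proof.
move=> hx; rewrite (@proj_decomposition [:: a] (fun i => if i == a then x else 0)) //.
- by rewrite inE; case: eqP.
- by move=> i; case: eqP => [->|_] //; apply: hom0.
- by rewrite big_seq1 eqxx.
Qed.

Section DecompositionSum.
Variables (V : lmodType K) (F : G -> A -> V).

Definition decomp_sum x := \sum_(g <- support x) F g (proj g x).

Hypothesis F0 : forall g, F g 0 = 0.

Lemma decomp_sumE x S : uniq S -> {subset support x <= S} ->
  decomp_sum x = \sum_(g <- S) F g (proj g x).
Proof.
move=> uniq_S sub_xS; rewrite /decomp_sum -(sum_if_mem _ _ uniq_S sub_xS) //.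
  by apply: eq_bigr => g _; case: ifP => // /negbT /proj_notin ->.
by case: (decompositionP x).
Qed.

Lemma decomp_sum_homog a x : hom a x -> decomp_sum x = F a x.
Proof.
move=> hx; pose S := undup (support x ++ [:: a]).
rewrite (@decomp_sumE x S) ?undup_uniq //; last first.
  by move=> i xi; rewrite mem_undup mem_cat xi.
have -> : F a x = \sum_(g <- [:: a]) F g x by rewrite big_seq1.
rewrite -(@sum_if_mem _ _ [:: a] S) ?undup_uniq //.
  by apply: eq_bigr => g _; rewrite (proj_homog g hx) inE; case: eqP.
by move=> i; rewrite inE => /eqP ->; rewrite mem_undup mem_cat mem_head orbT.
Qed.

End DecompositionSum.

Lemma decomp_sum_linear (V : lmodType K) (F : G -> A -> V) :
  (forall g, linear (F g)) -> linear (decomp_sum F).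
Proof.
move=> linF k x y; pose S := undup (support x ++ support y ++ support (k *: x + y)).
have F0 g : F g 0 = 0 by apply: lin0.
rewrite !(@decomp_sumE _ _ F0 _ S) ?undup_uniq //;
  try by move=> i Si; rewrite mem_undup !mem_cat Si ?orbT.
rewrite scaler_sumr -big_split /=; apply: eq_bigr => g _.
by rewrite proj_linear linF.
Qed.

Lemma eq_decomp_sum (V : lmodType K) (F1 F2 : G -> A -> V) x :
  (forall g u, F1 g u = F2 g u) -> decomp_sum F1 x = decomp_sum F2 x.
Proof. by move=> eq_F; apply: eq_bigr => g _. Qed.

Lemma decomp_sum_eq0 (V : lmodType K) (F : G -> A -> V) x :
  (forall g u, F g u = 0) -> decomp_sum F x = 0.
Proof. by move=> F_eq0; apply: big1 => g _. Qed.

Lemma decomp_sumDZ (V : lmodType K) k (F1 F2 : G -> A -> V) x :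
  decomp_sum (fun g u => k *: F1 g u + F2 g u) x
  = k *: decomp_sum F1 x + decomp_sum F2 x.
Proof. by rewrite /decomp_sum big_split /= scaler_sumr. Qed.

End GradedSpace.

Section TrilinearExtension.
Variables (G : zmodType) (K : fieldType) (A : lmodType K) (hom : G -> A -> Prop).
Hypothesis grading : is_grading hom.
Variable B : G -> G -> G -> A -> A -> A -> A.
Hypotheses (linB1 : forall a b c y z, linear (fun x => B a b c x y z))
           (linB2 : forall a b c x z, linear (fun y => B a b c x y z))
           (linB3 : forall a b c x y, linear (B a b c x y)).

Definition trilinear_extension x y z :=
  decomp_sum grading (fun a u =>
    decomp_sum grading (fun b v =>
      decomp_sum grading (fun c w => B a b c u v w) z) y) x.

Lemma trilinear_extension_homog a b c x y z : hom a x -> hom b y -> hom c z ->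
  trilinear_extension x y z = B a b c x y z.
Proof.
move=> hx hy hz; rewrite /trilinear_extension (decomp_sum_homog _ _ hx); last first.
  by move=> a'; do 2 apply: decomp_sum_eq0 => ? ?; exact: lin0 (linB1 _ _ _ _ _).
rewrite (decomp_sum_homog _ _ hy); last first.
  by move=> b'; apply: decomp_sum_eq0 => ? ?; exact: lin0 (linB2 _ _ _ _ _).
by rewrite (decomp_sum_homog _ _ hz) // => c'; exact: lin0 (linB3 _ _ _ _ _).
Qed.

Lemma trilinear_extension_linear1 y z : linear (fun x => trilinear_extension x y z).
Proof.
apply: decomp_sum_linear => a k u u'.
rewrite -decomp_sumDZ; apply: eq_decomp_sum => b v.
rewrite -decomp_sumDZ; apply: eq_decomp_sum => c w; exact: linB1.
Qed.

Lemma trilinear_extension_linear2 x z : linear (fun y => trilinear_extension x y z).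
Proof.
move=> k y y'; rewrite -decomp_sumDZ; apply: eq_decomp_sum => a u.
apply: decomp_sum_linear => b k' v v'.
rewrite -decomp_sumDZ; apply: eq_decomp_sum => c w; exact: linB2.
Qed.

Lemma trilinear_extension_linear3 x y : linear (trilinear_extension x y).
Proof.
move=> k z z'; rewrite -decomp_sumDZ; apply: eq_decomp_sum => a u.
rewrite -decomp_sumDZ; apply: eq_decomp_sum => b v.
apply: decomp_sum_linear => c k' w w'; exact: linB3.
Qed.

End TrilinearExtension.

Section ColorTrialgebra.
Variables (G : zmodType) (K : fieldType) (A : lmodType K) (hom : G -> A -> Prop)
  (eps : G -> G -> K) (dl pp dr : A -> A -> A).
Hypothesis trial : color_trialgebra hom eps dl pp dr.

Lemma trial_grading : is_grading hom. Proof. by case: trial. Qed.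
Lemma trial_bicharacter : skew_bicharacter eps. Proof. by case: trial. Qed.

Lemma eps_neq0 a b : eps a b != 0. Proof. by case: trial_bicharacter. Qed.
Lemma epsDr a b c : eps a (b + c) = eps a b * eps a c.
Proof. by case: trial_bicharacter. Qed.
Lemma epsDl a b c : eps (a + b) c = eps a c * eps b c.
Proof. by case: trial_bicharacter. Qed.
Lemma epsV a b : eps b a = (eps a b)^-1.
Proof.
apply: (mulfI (eps_neq0 a b)); rewrite mulfV ?eps_neq0 //.
by case: trial_bicharacter.
Qed.

Lemma trial_bilinear :
  [/\ even_bilinear hom dl, even_bilinear hom pp & even_bilinear hom dr].
Proof. by case: trial. Qed.

Lemma dl_linearl y : linear (dl ^~ y).
Proof. by case: trial_bilinear => -[+ _ _] _ _ k x x'; apply. Qed.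
Lemma dl_linearr x : linear (dl x).
Proof. by case: trial_bilinear => -[_ + _] _ _ k y y'; apply. Qed.
Lemma pp_linearl y : linear (pp ^~ y).
Proof. by case: trial_bilinear => _ [+ _ _] _ k x x'; apply. Qed.
Lemma pp_linearr x : linear (pp x).
Proof. by case: trial_bilinear => _ [_ + _] _ k y y'; apply. Qed.
Lemma dr_linearl y : linear (dr ^~ y).
Proof. by case: trial_bilinear => _ _ [+ _ _] k x x'; apply. Qed.
Lemma dr_linearr x : linear (dr x).
Proof. by case: trial_bilinear => _ _ [_ + _] k y y'; apply. Qed.

Lemma dl_hom a b x y : hom a x -> hom b y -> hom (a + b) (dl x y).
Proof. by case: trial_bilinear => -[_ _ +] _ _; apply. Qed.
Lemma pp_hom a b x y : hom a x -> hom b y -> hom (a + b) (pp x y).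
Proof. by case: trial_bilinear => _ [_ _ +] _; apply. Qed.
Lemma dr_hom a b x y : hom a x -> hom b y -> hom (a + b) (dr x y).
Proof. by case: trial_bilinear => _ _ [_ _ +]; apply. Qed.

Ltac expand_products :=
  rewrite ?(linB (dl_linearl _), linZ (dl_linearl _), linB (dl_linearr _),
            linZ (dl_linearr _), linB (pp_linearl _), linZ (pp_linearl _),
            linB (pp_linearr _), linZ (pp_linearr _), linB (dr_linearl _),
            linZ (dr_linearl _), linB (dr_linearr _), linZ (dr_linearr _)).

Section Associativity.
Variables (a b c : G) (x y z : A).
Hypotheses (hx : hom a x) (hy : hom b y) (hz : hom c z).
Let axioms := let: And4 _ _ _ axioms := trial in axioms a b c x y z hx hy hz.

Lemma dlA : dl (dl x y) z = dl x (dl y z). Proof. by case: axioms. Qed.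
Lemma drA : dr (dr x y) z = dr x (dr y z).
Proof. by case: axioms => _ [_ []]. Qed.
Lemma dlAr : dl (dl x y) z = dl x (dr y z).
Proof. by case: axioms => _ [_ [_ [[]]]]. Qed.
Lemma dr_dlA : dl (dr x y) z = dr x (dl y z).
Proof. by case: axioms => _ [_ [_ [_ []]]]. Qed.
Lemma dl_drA : dr (dl x y) z = dr x (dr y z).
Proof. by case: axioms => _ [_ [_ [_ [_ [[]]]]]]. Qed.
Lemma pp_dlA : dl (pp x y) z = pp x (dl y z).
Proof. by case: axioms => _ [_ [_ [_ [_ [_ []]]]]]. Qed.
Lemma dl_ppA : pp (dl x y) z = pp x (dr y z).
Proof. by case: axioms => _ [_ [_ [_ [_ [_ [_ []]]]]]]. Qed.
Lemma dr_ppA : pp (dr x y) z = dr x (pp y z).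
Proof. by case: axioms => _ [_ [_ [_ [_ [_ [_ []]]]]]]. Qed.

End Associativity.

(* {x, w} and [y, z], with the degrees of the arguments passed explicitly. *)
Definition dbr a g x w := dl x w - eps a g *: dr w x.
Definition pcomm b c y z := pp y z - eps b c *: pp z y.

Lemma dbr_linearl a g w : linear (dbr a g ^~ w).
Proof. exact: linear_subZ (dl_linearl w) (dr_linearr w). Qed.
Lemma dbr_linearr a g x : linear (dbr a g x).
Proof. exact: linear_subZ (dl_linearr x) (dr_linearl x). Qed.
Lemma pcomm_linearl b c z : linear (pcomm b c ^~ z).
Proof. exact: linear_subZ (pp_linearl z) (pp_linearr z). Qed.
Lemma pcomm_linearr b c y : linear (pcomm b c y).
Proof. exact: linear_subZ (pp_linearr y) (pp_linearl y). Qed.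

Lemma dbr_hom a g x w : hom a x -> hom g w -> hom (a + g) (dbr a g x w).
Proof.
move=> hx hw; apply: (homBZ trial_grading); first exact: dl_hom.
by rewrite addrC; apply: dr_hom.
Qed.
Lemma pcomm_hom b c y z : hom b y -> hom c z -> hom (b + c) (pcomm b c y z).
Proof.
move=> hy hz; apply: (homBZ trial_grading); first exact: pp_hom.
by rewrite addrC; apply: pp_hom.
Qed.

Lemma dbr_leibniz a g h x w v : hom a x -> hom g w -> hom h v ->
  dbr (a + g) h (dbr a g x w) v
  = dbr a (g + h) x (dbr g h w v) + eps g h *: dbr (a + h) g (dbr a h x v) w.
Proof.
move=> hx hw hv; rewrite /dbr; expand_products.
rewrite (dlA hx hw hv) (dr_dlA hw hx hv) -(dlAr hx hv hw) (dl_drA hw hv hx).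
rewrite (drA hv hw hx) (dr_dlA hv hx hw).
lincomb_eq [:: dl x (dl w v); dr w (dl x v); dr v (dl x w); dr v (dr w x);
               dl (dl x v) w; dr w (dr v x)];
  rewrite ?epsDr ?epsDl ?(epsV g h); field; by rewrite ?eps_neq0.
Qed.

Lemma dbr_pp_derivation b c h y z v : hom b y -> hom c z -> hom h v ->
  dbr (b + c) h (pp y z) v = pp y (dbr c h z v) + eps c h *: pp (dbr b h y v) z.
Proof.
move=> hy hz hv; rewrite /dbr; expand_products.
rewrite (pp_dlA hy hz hv) -(dr_ppA hv hy hz) (dl_ppA hy hv hz).
lincomb_eq [:: pp y (dl z v); pp (dr v y) z; pp y (dr v z)];
  rewrite ?epsDr ?epsDl; field; by rewrite ?eps_neq0.
Qed.

Lemma dbr_pcomm_derivation b c h y z v : hom b y -> hom c z -> hom h v ->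
  dbr (b + c) h (pcomm b c y z) v
  = pcomm b (c + h) y (dbr c h z v) + eps c h *: pcomm (b + h) c (dbr b h y v) z.
Proof.
move=> hy hz hv; rewrite /pcomm (linB (dbr_linearl _ _ _)) (linZ (dbr_linearl _ _ _)).
rewrite (dbr_pp_derivation hy hz hv) [b + c]addrC (dbr_pp_derivation hz hy hv).
lincomb_eq [:: pp y (dbr c h z v); pp (dbr b h y v) z;
               pp z (dbr b h y v); pp (dbr c h z v) y];
  rewrite ?epsDr ?epsDl ?(epsV c h); field; by rewrite ?eps_neq0.
Qed.

Local Notation br := (tri_bracket eps dl pp dr).

Lemma tri_bracketE a b c x y z :
  br a b c x y z = dbr a (b + c) x (pcomm b c y z).
Proof. by []. Qed.

Lemma tri_bracket_hom a b c x y z : hom a x -> hom b y -> hom c z ->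
  hom (a + b + c) (br a b c x y z).
Proof. by move=> hx hy hz; rewrite -addrA; apply: dbr_hom => //; apply: pcomm_hom. Qed.

Lemma tri_bracket_leibniz a b c d e x y z t u :
  hom a x -> hom b y -> hom c z -> hom d t -> hom e u ->
  br (a + b + c) d e (br a b c x y z) t u
  = br a b (c + d + e) x y (br c d e z t u)
    + eps c (d + e) *: br a (b + d + e) c x (br b d e y t u) z
    + eps (b + c) (d + e) *: br (a + d + e) b c (br a d e x t u) y z.
Proof.
move=> hx hy hz ht hu; rewrite !tri_bracketE.
rewrite -[a + b + c]addrA -[c + d + e]addrA -[b + d + e]addrA -[a + d + e]addrA.
rewrite [b + (c + _)]addrA [b + (d + e) + c]addrAC.
rewrite (dbr_leibniz hx (pcomm_hom hy hz) (pcomm_hom ht hu)).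
rewrite (dbr_pcomm_derivation hy hz (pcomm_hom ht hu)).
by rewrite (linD (dbr_linearr _ _ _)) (linZ (dbr_linearr _ _ _)).
Qed.

Lemma tri_bracket_linear1 a b c y z :
  linear (fun x => br a b c x y z).
Proof. exact: dbr_linearl. Qed.

Lemma tri_bracket_linear2 a b c x z :
  linear (fun y => br a b c x y z).
Proof.
by move=> k y y'; rewrite !tri_bracketE (pcomm_linearl _ _ _) (dbr_linearr _ _ _).
Qed.

Lemma tri_bracket_linear3 a b c x y :
  linear (br a b c x y).
Proof.
by move=> k z z'; rewrite !tri_bracketE (pcomm_linearr _ _ _) (dbr_linearr _ _ _).
Qed.

Let T := trilinear_extension trial_grading br.

Lemma tri_bracket_extensionE a b c x y z : hom a x -> hom b y -> hom c z ->
  T x y z = br a b c x y z.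
Proof.
exact: (trilinear_extension_homog trial_grading
  tri_bracket_linear1 tri_bracket_linear2 tri_bracket_linear3).
Qed.

Lemma tri_bracket_extension_leibniz : ternary_leibniz_color hom eps T.
Proof.
split; [exact: trial_grading | exact: trial_bicharacter | split | ].
- move=> k x x' y z.
  exact: (trilinear_extension_linear1 trial_grading tri_bracket_linear1).
- move=> k x y y' z.
  exact: (trilinear_extension_linear2 trial_grading tri_bracket_linear2).
- move=> k x y z z'.
  exact: (trilinear_extension_linear3 trial_grading tri_bracket_linear3).
- move=> a b c x y z hx hy hz.
  by rewrite (tri_bracket_extensionE hx hy hz); apply: tri_bracket_hom.
move=> a b c d e x y z t u hx hy hz ht hu.
have hxyz := tri_bracket_hom hx hy hz; have hztu := tri_bracket_hom hz ht hu.
have hytu := tri_bracket_hom hy ht hu; have hxtu := tri_bracket_hom hx ht hu.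
rewrite (tri_bracket_extensionE hx hy hz) (tri_bracket_extensionE hxyz ht hu).
rewrite (tri_bracket_extensionE hz ht hu) (tri_bracket_extensionE hx hy hztu).
rewrite (tri_bracket_extensionE hy ht hu) (tri_bracket_extensionE hx hytu hz).
rewrite (tri_bracket_extensionE hx ht hu) (tri_bracket_extensionE hxtu hy hz).
exact: tri_bracket_leibniz.
Qed.

End ColorTrialgebra.

Theorem mainTheorem10 (G : zmodType) (K : fieldType) (A : lmodType K)
    (hom : G -> A -> Prop) (eps : G -> G -> K) (dl pp dr : A -> A -> A) :
  (2%:R : K) != 0 ->
  color_trialgebra hom eps dl pp dr ->
  exists T : A -> A -> A -> A,
    (forall a b c x y z, hom a x -> hom b y -> hom c z ->
       T x y z = tri_bracket eps dl pp dr a b c x y z)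
    /\ ternary_leibniz_color hom eps T.
Proof.
move=> _ trial.
exists (trilinear_extension (trial_grading trial) (tri_bracket eps dl pp dr)).
split; [exact: tri_bracket_extensionE | exact: tri_bracket_extension_leibniz].
Qed.
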